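(* Let $\epsilon>0$ and let $T$ be a tournament on $n$ vertices which is $\epsilon$-far from being transitive. Let $v_1,\ldots,v_n$ be an optimal ordering of $V(T)$ and let $B$ be the set of backwards edges in this ordering. Then at least one of the following holds: (1) the subset $B'\subseteq B$ consisting of the backwards edges of length at least $n/16$ satisfies $|B'|\ge |B|/4$; (2) $T$ contains a subtournament on at least $n/8$ vertices which is $2\epsilon$-far from being transitive.
   Context: Given an ordering $v_1,\ldots,v_n$ of the vertices of a tournament $T$, a backwards edge is an edge directed from $v_j$ to $v_i$ with $i<j$; its length is $j-i$. An ordering is optimal if it minimizes the number of backwards edges among all orderings of $V(T)$. An $m$-vertex tournament is $\delta$-far from being transitive if every ordering of its vertices has at least $\delta m^2$ backwards edges (equivalently, at least $\delta m^2$ edge directions must be switched in any ordering to make it transitive). *)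

From HB Require Import structures.
From mathcomp Require Import all_boot all_order all_algebra.
Set Implicit Arguments. Unset Strict Implicit. Unset Printing Implicit Defensive.
Import Order.TTheory GRing.Theory Num.Theory.

Definition is_tournament (V : finType) (E : rel V) : Prop :=
  (forall x, ~~ E x x) /\
  (forall x y, x != y -> (E x y || E y x) && ~~ (E x y && E y x)).

Definition is_ordering (V : finType) (S : {set V}) (s : seq V) : Prop :=
  uniq s /\ s =i S.

Definition backE (V : finType) (E : rel V) (s : seq V) : {set V * V} :=
  [set xy | [&& xy.1 \in s, xy.2 \in s, E xy.1 xy.2 & index xy.2 s < index xy.1 s]].

Definition blen (V : finType) (s : seq V) (xy : V * V) : nat :=
  index xy.1 s - index xy.2 s.

Definition optimal_ordering (V : finType) (E : rel V) (S : {set V}) (s : seq V) : Prop :=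
  is_ordering S s /\
  forall s', is_ordering S s' -> #|backE E s| <= #|backE E s'|.

Definition far_from_transitive (R : realFieldType) (V : finType) (E : rel V)
  (S : {set V}) (delta : R) : Prop :=
  forall s, is_ordering S s -> (delta * (#|S|%:R) ^+ 2 <= (#|backE E s|)%:R)%R.

From mathcomp Require Import all_boot all_order all_algebra.
From mathcomp Require Import zify lra.
From Stdlib Require Import Classical.
Import Order.TTheory GRing.Theory Num.Theory.
Set Implicit Arguments. Unset Strict Implicit. Unset Printing Implicit Defensive.

(* Suppose no set of at least n/8 vertices induces a 2eps-far subtournament.
   Restricted to a window of consecutive vertices, an optimal ordering is still
   optimal (otherwise reordering the window would improve the whole ordering),
   so a window of w >= n/8 vertices has fewer than 2 eps w^2 backwards edges.
   About 15 windows of width about n/8, placed every n/16 positions, contain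
   every backwards edge of length < n/16; hence the short backwards edges number
   at most 15 * 2 eps (n/8)^2 <= 3/4 eps n^2 <= 3/4 |B|.  The argument never uses
   that T is a tournament. *)

Lemma index_take_drop (T : eqType) (s : seq T) l w x :
  x \in s -> l <= index x s < l + w ->
  x \in take w (drop l s) /\ index x (take w (drop l s)) = index x s - l.
Proof.
move=> xs /andP[lx xw].
have xs_lt := index_mem x s; rewrite xs in xs_lt.
have idx_drop : index x s = l + index x (drop l s).
  rewrite -{1}(cat_take_drop l s) index_cat in_take // size_take_min.
  by rewrite ltnNge lx /=; lia.
have xd : x \in drop l s by rewrite -index_mem size_drop; lia.
have xt : x \in take w (drop l s) by rewrite in_take //; lia.
split=> //.
by rewrite idx_drop -{2}(cat_take_drop w (drop l s)) index_cat xt; lia.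
Qed.

Lemma index_cat3 (T : eqType) (a m b : seq T) x :
  index x (a ++ m ++ b) =
  if x \in a then index x a else if x \in m then size a + index x m
  else size a + size m + index x b.
Proof. by rewrite !index_cat; case: (x \in a) => //; case: (x \in m) => //; lia. Qed.

Lemma cat3_uniq_notin (T : eqType) (a m b : seq T) x :
  uniq (a ++ m ++ b) -> x \in a -> x \notin m.
Proof.
rewrite cat_uniq => /and3P[_ /hasPn am _] xa; apply/negP => xm.
by have := am x; rewrite mem_cat xm => /(_ isT); rewrite xa.
Qed.

Section SegmentReplacement.
Variables (V : finType) (E : rel V).

Definition pairs_in (m : seq V) : {set V * V} :=
  [set xy | (xy.1 \in m) && (xy.2 \in m)].

Lemma index_cat3_perm_lt (a m b t : seq V) x y :
  uniq (a ++ m ++ b) -> perm_eq m t -> ~~ ((x \in m) && (y \in m)) ->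
  (index y (a ++ m ++ b) < index x (a ++ m ++ b)) =
  (index y (a ++ t ++ b) < index x (a ++ t ++ b)).
Proof.
move=> u pmt; rewrite !index_cat3.
have := index_mem x a; have := index_mem y a.
have := index_mem x m; have := index_mem y m.
have := index_mem x t; have := index_mem y t.
rewrite -!(perm_mem pmt) -(perm_size pmt).
case: (x \in a) (cat3_uniq_notin (x := x) u) => [/(_ isT) /negbTE ->|_];
case: (y \in a) (cat3_uniq_notin (x := y) u) => [/(_ isT) /negbTE ->|_];
case: (x \in m); case: (y \in m) => //=; lia.
Qed.

Lemma backE_cat3I (a m b : seq V) : uniq (a ++ m ++ b) ->
  backE E (a ++ m ++ b) :&: pairs_in m = backE E m.
Proof.
move=> u; apply/setP => -[x y]; rewrite !inE /= !mem_cat !index_cat3.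
case xm: (x \in m); case ym: (y \in m); rewrite ?andbF ?andbT //=.
have /negbTE -> : x \notin a by apply: contraL xm => /(cat3_uniq_notin (x := x) u).
have /negbTE -> : y \notin a by apply: contraL ym => /(cat3_uniq_notin (x := y) u).
by rewrite ltn_add2l.
Qed.

Lemma backE_cat3D (a m b t : seq V) : uniq (a ++ m ++ b) -> perm_eq m t ->
  backE E (a ++ m ++ b) :\: pairs_in m = backE E (a ++ t ++ b) :\: pairs_in m.
Proof.
move=> u pmt; apply/setP => -[x y]; rewrite !inE /=.
case: (boolP ((x \in m) && (y \in m))) => //= nxy.
by rewrite !mem_cat -!(perm_mem pmt) (index_cat3_perm_lt u pmt nxy).
Qed.

Lemma card_backE_cat3_perm (a m b t : seq V) : uniq (a ++ m ++ b) -> perm_eq m t ->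
  #|backE E (a ++ m ++ b)| + #|backE E t| = #|backE E (a ++ t ++ b)| + #|backE E m|.
Proof.
move=> u pmt.
have u' : uniq (a ++ t ++ b).
  by rewrite -(perm_uniq (_ : perm_eq (a ++ m ++ b) _)) // perm_cat2l perm_cat2r.
have pairs_mt : pairs_in m = pairs_in t.
  by apply/setP => -[x y]; rewrite !inE /= !(perm_mem pmt).
rewrite -(cardsID (pairs_in m) (backE E (a ++ m ++ b))).
rewrite -(cardsID (pairs_in m) (backE E (a ++ t ++ b))).
rewrite (backE_cat3D u pmt) (backE_cat3I u) {2}pairs_mt (backE_cat3I u'); lia.
Qed.
End SegmentReplacement.

(* Windows of width [w] starting at [minn (j * d) (n - w)] for [j < K]. *)
Definition window_params n d w K :=
  [&& 0 < d, 0 < K, n <= 8 * w, w <= n, d + (n - 1) %/ 16 <= w,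
      n <= (K - 1) * d + w & 8 * K * w ^ 2 <= 3 * n ^ 2].

Lemma window_params_exist n : 17 <= n -> exists d w K, window_params n d w K.
Proof.
move=> n17; case: (ltnP n 64) => n64.
  (* For small n the choice below loses too much to rounding; take w = ceil(n/8)
     and the largest step that still catches all short pairs, and check each n
     by computation. *)
  pose w n := (n + 7) %/ 8; pose d n := w n - (n - 1) %/ 16.
  pose K n := 1 + (n - w n + d n - 1) %/ d n.
  have small : all (fun n => window_params n (d n) (w n) (K n)) (iota 17 47).
    by vm_compute.
  exists (d n), (w n), (K n); apply: (allP small); rewrite mem_iota; lia.
exists (n %/ 16).+2, (n %/ 16).*2.+2, 15.
have n16 : 16 * (n %/ 16) <= n < 16 * (n %/ 16) + 16 by lia.
apply/and5P; split; try lia; apply/and3P; split; try lia.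
nia.
Qed.

Lemma window_params_cover n d w K p q : window_params n d w K ->
  p < q < n -> 16 * (q - p) < n ->
  exists2 j, j < K & minn (j * d) (n - w) <= p /\ q < minn (j * d) (n - w) + w.
Proof.
case/and5P=> d0 K0 _ wn /and3P[dw nK _] /andP[pq qn] short.
have pd := divn_eq p d; have pmodd := ltn_pmod p d0.
case: (leqP (p %/ d) (K - 1)) => jK.
  by exists (p %/ d); [lia | split; lia].
exists (K - 1); first lia.
have : (K - 1) * d <= p %/ d * d by rewrite leq_mul2r; lia.
split; lia.
Qed.

Lemma short_pairs_window_cover n : exists w K (l : nat -> nat),
  [/\ n <= 8 * w, 8 * K * w ^ 2 <= 3 * n ^ 2, forall j, l j + w <= n &
      forall p q, p < q < n -> 16 * (q - p) < n ->
      exists2 j, j < K & l j <= p /\ q < l j + w].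
Proof.
case: (ltnP n 17) => n17.
  by exists n, 0, (fun=> 0); split=> // [|p q /andP[pq _] short]; lia.
have [d [w [K params]]] := window_params_exist n17.
exists w, K, (fun j => minn (j * d) (n - w)).
move: (params) => /and5P[_ _ n8w wn /and3P[_ _ KW]].
by split=> // [j|p q pqn]; [lia | exact: window_params_cover].
Qed.

Lemma leq_card_bigcup (T I : finType) (P : pred I) (F : I -> {set T}) :
  #|\bigcup_(i | P i) F i| <= \sum_(i | P i) #|F i|.
Proof.
elim/big_ind2: _ => [|a A b B aA bB|//]; first by rewrite cards0.
exact: leq_trans (leq_card_setU A B).1 (leq_add aA bB).
Qed.

Section OptimalSegments.
Variables (V : finType) (E : rel V).

Lemma card_take_drop (s : seq V) l w : uniq s -> l + w <= size s ->
  #|[set x in take w (drop l s)]| = w.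
Proof.
move=> us lw; rewrite cardsE (card_uniqP _); last by rewrite take_uniq ?drop_uniq.
by rewrite size_takel // size_drop; lia.
Qed.

Lemma mem_backE_take_drop (s : seq V) l w xy : xy \in backE E s ->
  l <= index xy.2 s -> index xy.1 s < l + w -> xy \in backE E (take w (drop l s)).
Proof.
case: xy => x y; rewrite !inE /= => /and4P[xs ys Exy yx] ly xw.
have hx : l <= index x s < l + w by lia.
have hy : l <= index y s < l + w by lia.
have [xm ->] := index_take_drop xs hx; have [ym ->] := index_take_drop ys hy.
by rewrite xm ym Exy /=; lia.
Qed.

Lemma optimal_ordering_take_drop (S : {set V}) s l w :
  optimal_ordering E S s ->
  optimal_ordering E [set x in take w (drop l s)] (take w (drop l s)).
Proof.
move=> [[us sS] opt]; set m := take w (drop l s).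
have um : uniq m by rewrite take_uniq // drop_uniq.
split; first by split=> // x; rewrite inE.
move=> t [ut tm].
have pmt : perm_eq m t by apply: uniq_perm => // x; rewrite tm inE.
have es : s = take l s ++ m ++ drop w (drop l s) by rewrite !cat_take_drop.
have pst : perm_eq s (take l s ++ t ++ drop w (drop l s)).
  by rewrite {1}es perm_cat2l perm_cat2r.
have u : uniq (take l s ++ m ++ drop w (drop l s)) by rewrite -es.
have := card_backE_cat3_perm E u pmt; rewrite -es.
have := opt (take l s ++ t ++ drop w (drop l s)).
rewrite /is_ordering -(perm_uniq pst) us => /(_ (conj isT _)) h.
have : #|backE E s| <= #|backE E (take l s ++ t ++ drop w (drop l s))|.
  by apply: h => x; rewrite -(perm_mem pst) sS.
lia.
Qed.

Lemma optimal_far_from_transitive (R : realFieldType) (S : {set V}) s (delta : R) :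
  optimal_ordering E S s -> (delta * #|S|%:R ^+ 2 <= #|backE E s|%:R)%R ->
  far_from_transitive E S delta.
Proof. by move=> [_ opt] h t /opt st; apply: le_trans h _; rewrite ler_nat. Qed.

Lemma card_backE_take_drop_lt (R : realFieldType) (S : {set V}) s l w (delta : R) :
  optimal_ordering E S s ->
  ~ far_from_transitive E [set x in take w (drop l s)] delta ->
  (#|backE E (take w (drop l s))|%:R < delta * #|[set x in take w (drop l s)]|%:R ^+ 2)%R.
Proof.
move=> opt not_far; rewrite ltNge; apply/negP => dense; apply: not_far.
exact: optimal_far_from_transitive (optimal_ordering_take_drop _ _ opt) dense.
Qed.
End OptimalSegments.

Lemma card_backE_blen_covered (V : finType) (E : rel V) (s : seq V)
    (P : pred nat) K (l : nat -> nat) w :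
  (forall p q, p < q < size s -> P (q - p) ->
     exists2 j, j < K & l j <= p /\ q < l j + w) ->
  #|[set xy in backE E s | P (blen s xy)]| <=
    \sum_(j < K) #|backE E (take w (drop (l j) s))|.
Proof.
move=> cover.
apply: (@leq_trans #|\bigcup_(j < K) backE E (take w (drop (l j) s))|);
  last exact: leq_card_bigcup.
apply/subset_leq_card/subsetP => xy; rewrite inE => /andP[xyB Pxy].
have := xyB; rewrite inE => /and4P[x_s _ _ yx]; rewrite -index_mem in x_s.
have [j jK [lj jw]] := cover _ _ (introT andP (conj yx x_s)) Pxy.
by apply/bigcupP; exists (Ordinal jK) => //; apply: mem_backE_take_drop.
Qed.

Local Open Scope ring_scope.

Theorem mainTheorem3 (R : realFieldType) (V : finType) (E : rel V) (eps : R)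
  (s : seq V) :
  0 < eps ->
  is_tournament E ->
  far_from_transitive E [set: V] eps ->
  optimal_ordering E [set: V] s ->
  (#|backE E s|%:R / 4 <=
     #|[set xy in backE E s | #|V|%:R / 16 <= (blen s xy)%:R :> R]|%:R :> R)
  \/
  (exists S : {set V}, #|V|%:R / 8 <= #|S|%:R :> R /\
     far_from_transitive E S (2 * eps)).
Proof.
move=> eps0 _ far opt; have [[us sT] _] := opt.
have sz : size s = #|V| by rewrite -(card_uniqP us) -cardsT; apply: eq_card.
set n := #|V| in sz *; set B := backE E s; set L := [set xy in B | _].
pose Sh := [set xy in B | 16 * blen s xy < n]%N.
have farB : eps * n%:R ^+ 2 <= #|B|%:R by have := far s (conj us sT); rewrite cardsT.
case: (classic (exists S : {set V}, n%:R / 8 <= #|S|%:R :> R /\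
  far_from_transitive E S (2 * eps))) => [|no_far]; [by right | left].
have [w [K [l [n8w KwN lw cover]]]] := short_pairs_window_cover n.
pose m j := take w (drop (l j) s).
have card_m j : #|[set x in m j]| = w by rewrite card_take_drop ?sz.
have sparse j : #|backE E (m j)|%:R <= 2 * eps * w%:R ^+ 2.
  rewrite -(card_m j); apply/ltW/(card_backE_take_drop_lt opt) => far_m.
  apply: no_far; exists [set x in m j]; split=> //.
  by rewrite card_m ler_pdivrMr // -natrM ler_nat; lia.
have Sh_le : #|Sh|%:R <= K%:R * (2 * eps * w%:R ^+ 2).
  apply: (@le_trans _ _ (\sum_(j < K) #|backE E (m j)|)%:R).
    rewrite ler_nat; apply: (@card_backE_blen_covered _ E s (fun k => 16 * k < n)%N).
    by rewrite sz.
  rewrite natr_sum (_ : K%:R * _ = \sum_(j < K) (2 * eps * w%:R ^+ 2)).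
    by apply: ler_sum => j _.
  by rewrite sumr_const card_ord mulr_natl.
have splitB : #|B|%:R = #|L|%:R + #|Sh|%:R :> R.
  rewrite -natrD -(cardsID [set xy | n%:R / 16 <= (blen s xy)%:R :> R] B).
  congr (_ + _)%:R; apply: eq_card => xy; rewrite !inE // ler_pdivrMr // -natrM.
  by rewrite ler_nat -ltnNge mulnC andbC.
have KwR : 8 * K%:R * w%:R ^+ 2 <= 3 * n%:R ^+ 2 :> R.
  by move: KwN; rewrite -(ler_nat R) !natrM !expr2.
have := ler_pM2l eps0 (8 * K%:R * w%:R ^+ 2) (3 * n%:R ^+ 2); rewrite KwR.
rewrite splitB in farB *; nra.
Qed.
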